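(* Let $G+H$ and $G'+H'$ be mixed graphs built from supply graphs $G,G'$ and demand digraphs $H,H'$, such that $G'+H'$ is a minor of $G+H$. Suppose there exist, for $(G',H')$, a measurable partition of the population by OD-pairs, an assignment of cost functions, and two strict equilibria inducing different flows on some arc. Then $(G,H)$ does not have the uniqueness property.
   Context: A supply graph is a finite undirected graph $G=(V,E)$ (parallel edges allowed), with directed version replacing each edge by two opposite arcs; a demand digraph is a simple digraph $H=(T,L)$ with $T\subseteq V$, arcs being OD-pairs; $G+H$ denotes the mixed graph $(V,E,L)$. A minor of a mixed graph is obtained by taking a sub-mixed-graph (subsets of vertices, edges and arcs) and contracting some of its edges (deleting an edge and identifying its endpoints). Routes for $(o,d)\in L$ are directed $(o,d)$-paths in the directed version of $G$. Users form a bounded interval with Lebesgue measure, partitioned measurably by OD-pair; a strategy profile assigns measurably to each user a route of his OD-pair; flows are measures of users using each arc; each user has nonnegative continuous strictly increasing arc cost functions (measurable in the user); an equilibrium is a profile where every user takes a minimal-cost route; it is strict if every user has a unique minimal-cost route. $(G,H)$ has the uniqueness property if for every measurable partition of users into OD-pairs and every such cost assignment, the flow on each arc is the same in all equilibria. *)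

From HB Require Import structures.
From mathcomp Require Import all_boot all_order all_algebra.
From mathcomp Require Import all_classical all_reals all_analysis.
Set Implicit Arguments. Unset Strict Implicit. Unset Printing Implicit Defensive.
Import Order.TTheory GRing.Theory Num.Theory.
Import numFieldNormedType.Exports.
Local Open Scope classical_set_scope.
Local Open Scope ring_scope.

(* A supply graph G = (V,E) is a finite undirected multigraph: V, E    *)
(* finite types, [ends e] the (unordered) pair of endpoints of e; the  *)
(* order inside the pair is irrelevant (see the minor definition).     *)
(* A demand digraph H = (T,L) is a simple digraph on a subset of V:    *)
(* it is given by its arc set L : {set V * V} (no parallel arcs by     *)
(* construction), with no loops.                                       *)

Definition simple_demand (V : finType) (L : {set V * V}) : Prop :=
  forall v : V, (v, v) \notin L.

(* Directed version of G: each edge e gives the arcs (e,true) : e.1 -> e.2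
   and (e,false) : e.2 -> e.1. *)
Definition darc (E : finType) : finType := (E * bool)%type.

Definition dsrc (V E : finType) (ends : E -> V * V) (x : darc E) : V :=
  if x.2 then (ends x.1).1 else (ends x.1).2.
Definition ddst (V E : finType) (ends : E -> V * V) (x : darc E) : V :=
  if x.2 then (ends x.1).2 else (ends x.1).1.

Fixpoint dwalk (V E : finType) (ends : E -> V * V) (o : V) (p : seq (darc E))
  : bool :=
  if p is x :: p' then (dsrc ends x == o) && dwalk ends (ddst ends x) p'
  else true.

Definition is_route (V E : finType) (ends : E -> V * V) (o d : V)
  (p : seq (darc E)) : bool :=
  [&& dwalk ends o p, last o [seq ddst ends x | x <- p] == d &
      uniq (o :: [seq ddst ends x | x <- p])].

(* G'+H' is a minor of G+H: one takes a sub-mixed-graph (VS, ES, AS)   *)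
(* of G+H (every kept edge/arc has its endpoints in VS) and contracts  *)
(* a set C of its edges, i.e. deletes the edges of C and identifies    *)
(* the endpoints of each of them; the result is isomorphic to G'+H'.   *)

Definition contr_rel (V E : finType) (ends : E -> V * V) (C : {set E}) : rel V :=
  fun x y => [exists e in C, (ends e == (x, y)) || (ends e == (y, x))].

Definition is_minor
  (V E : finType) (ends : E -> V * V) (L : {set V * V})
  (V' E' : finType) (ends' : E' -> V' * V') (L' : {set V' * V'}) : Prop :=
  exists (VS : {set V}) (ES : {set E}) (AS : {set V * V}) (C : {set E})
         (pi : V -> V') (beta : E' -> E),
  [/\
      (forall e, e \in ES -> ((ends e).1 \in VS) && ((ends e).2 \in VS)),
      AS \subset L,
      (forall l, l \in AS -> (l.1 \in VS) && (l.2 \in VS)) &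
      C \subset ES] /\
  [/\ (forall x y, x \in VS -> y \in VS ->
         (pi x = pi y <-> connect (contr_rel ends C) x y)) &
      (forall v' : V', exists2 v, v \in VS & pi v = v')] /\
  [/\ injective beta,
      (forall e, e \in ES :\: C -> exists e', beta e' = e),
      (forall e', beta e' \in ES :\: C) &
      (forall e', ends' e' = (pi (ends (beta e')).1, pi (ends (beta e')).2)
               \/ ends' e' = (pi (ends (beta e')).2, pi (ends (beta e')).1))] /\
  [/\ {in AS &, injective (fun l : V * V => (pi l.1, pi l.2))} &
      L' = imset (fun l : V * V => (pi l.1, pi l.2)) (mem AS)].

Section Game.
Context {R : realType}.
Notation U := (measurableTypeR R).

Definition users (a b : R) : set R := [set u | a <= u <= b].

Definition od_partition (V : finType) (L : {set V * V}) (a b : R)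
  (od : R -> V * V) : Prop :=
  (forall u, users a b u -> od u \in L) /\
  (forall l : V * V, measurable ([set u | users a b u /\ od u = l] : set U)).

(* cost assignment: c u x t = cost for user u of arc x when its flow is t *)
Definition cost_assignment (E : finType) (a b : R)
  (c : R -> darc E -> R -> R) : Prop :=
  [/\ (forall u x t, users a b u -> 0 <= t -> 0 <= c u x t),
      (forall u x, users a b u ->
          {within [set t : R | 0 <= t], continuous (c u x)}),
      (forall u x t s, users a b u -> 0 <= t -> t < s -> c u x t < c u x s) &
      (forall x t, 0 <= t -> measurable_fun (users a b : set U) (fun u : U => c u x t))].

Definition strategy_profile (V E : finType) (ends : E -> V * V) (a b : R)
  (od : R -> V * V) (sigma : R -> seq (darc E)) : Prop :=
  (forall u, users a b u -> is_route ends (od u).1 (od u).2 (sigma u)) /\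
  (forall p : seq (darc E),
      measurable ([set u | users a b u /\ sigma u = p] : set U)).

Definition flow (E : finType) (a b : R) (sigma : R -> seq (darc E)) (x : darc E)
  : R :=
  fine (lebesgue_measure ([set u | users a b u /\ x \in sigma u] : set U)).

Definition route_cost (E : finType) (a b : R) (c : R -> darc E -> R -> R)
  (sigma : R -> seq (darc E)) (u : R) (p : seq (darc E)) : R :=
  \sum_(x <- p) c u x (flow a b sigma x).

Definition equilibrium (V E : finType) (ends : E -> V * V) (a b : R)
  (od : R -> V * V) (c : R -> darc E -> R -> R) (sigma : R -> seq (darc E))
  : Prop :=
  strategy_profile ends a b od sigma /\
  forall u, users a b u -> forall q, is_route ends (od u).1 (od u).2 q ->
    route_cost a b c sigma u (sigma u) <= route_cost a b c sigma u q.

Definition strict_equilibrium (V E : finType) (ends : E -> V * V) (a b : R)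
  (od : R -> V * V) (c : R -> darc E -> R -> R) (sigma : R -> seq (darc E))
  : Prop :=
  equilibrium ends a b od c sigma /\
  forall u, users a b u -> forall q, is_route ends (od u).1 (od u).2 q ->
    route_cost a b c sigma u q <= route_cost a b c sigma u (sigma u) ->
    q = sigma u.

Definition uniqueness_property (V E : finType) (ends : E -> V * V)
  (L : {set V * V}) (a b : R) : Prop :=
  forall (od : R -> V * V) (c : R -> darc E -> R -> R),
    od_partition L a b od -> cost_assignment a b c ->
    forall sigma1 sigma2,
      equilibrium ends a b od c sigma1 -> equilibrium ends a b od c sigma2 ->
      forall x, flow a b sigma1 x = flow a b sigma2 x.

End Game.

From HB Require Import structures.
From mathcomp Require Import all_boot all_order all_algebra.
From mathcomp Require Import all_classical all_reals all_analysis.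
From mathcomp Require Import ring lra.
Set Implicit Arguments. Unset Strict Implicit. Unset Printing Implicit Defensive.
Import Order.TTheory GRing.Theory Num.Theory.
Import numFieldNormedType.Exports.

(* A strict equilibrium of the minor G'+H' lifts to an equilibrium of G+H
   with the same flow on every arc coming from G'.  Users keep their costs on
   those arcs, increased by a small [delta]; an arc of a contracted edge costs
   [eta * 2 ^ rank + eps * t], and every other arc is prohibitively expensive.
   A route of G' lifts to routes of G through contracted edges, and the
   binary weights single out a unique lift of least weight.  The scales
   [delta >> eta >> eps] stay below the least positive cost difference
   between routes of G' (this is where strictness is needed), so routes of G
   compare lexicographically by the G'-cost of their projection, their
   length and their weight: the lifted profile is again an equilibrium.
   Two strict equilibria of the minor with different flows thus give two
   equilibria of G+H with different flows. *)

(** * Directed walks and routes *)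

Section DirectedWalks.
Variables (V E : finType) (ends : E -> V * V).
Local Notation src := (dsrc ends).
Local Notation dst := (ddst ends).
Local Notation walk_end o p := (last o [seq ddst ends x | x <- p]).

Lemma dwalk_cat o p1 p2 :
  dwalk ends o (p1 ++ p2) = dwalk ends o p1 && dwalk ends (walk_end o p1) p2.
Proof. by elim: p1 o => [|x p IH] o //=; rewrite IH andbA. Qed.

Lemma walk_end_cat o p1 p2 : walk_end o (p1 ++ p2) = walk_end (walk_end o p1) p2.
Proof. by rewrite map_cat last_cat. Qed.

Lemma dwalk_closed_subwalk o w :
  dwalk ends o w -> ~~ uniq (o :: [seq dst x | x <- w]) ->
  exists w1 w2 w3, [/\ w = w1 ++ w2 ++ w3, w2 != [::] &
                      walk_end (walk_end o w1) w2 = walk_end o w1].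
Proof.
elim: w o => [|x w IH] o //= /andP[_ w_walk].
rewrite negb_and negbK => /orP[back_to_o|w_loop].
  have /mapP[y yw ->] : o \in [seq dst z | z <- x :: w] by [].
  move: yw; set w' := x :: w => yw; case/path.splitP: yw => p1 p2.
  exists [::], (rcons p1 y), p2; split => //; first by case: p1.
  by rewrite map_rcons last_rcons.
have [w1 [w2 [w3 [-> w2_nil w2_closed]]]] := IH _ w_walk w_loop.
by exists (x :: w1), w2, w3.
Qed.

Lemma route_of_dwalk (P : seq (darc E) -> Prop) o w :
  (forall w1 w2 w3, dwalk ends o (w1 ++ w2 ++ w3) -> w2 != [::] ->
     walk_end (walk_end o w1) w2 = walk_end o w1 ->
     P (w1 ++ w2 ++ w3) -> P (w1 ++ w3)) ->
  dwalk ends o w -> P w ->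
  exists r, [/\ is_route ends o (walk_end o w) r, P r & r = w \/ size r < size w].
Proof.
move=> P_cut; have [n] := ubnP (size w); elim: n w => // n IH w w_lt w_walk Pw.
have [w_uniq|w_loop] := boolP (uniq (o :: [seq dst x | x <- w])).
  by exists w; split; [rewrite /is_route w_walk eqxx | | left].
have [w1 [w2 [w3 [w_eq w2_nil w2_closed]]]] := dwalk_closed_subwalk w_walk w_loop.
subst w.
have shorter : size (w1 ++ w3) < size (w1 ++ w2 ++ w3).
  by rewrite !size_cat ltn_add2l -{1}[size w3]add0n ltn_add2r lt0n size_eq0.
have := w_walk; rewrite !dwalk_cat => /and3P[walk1 _ walk3].
have cut_walk : dwalk ends o (w1 ++ w3) by rewrite dwalk_cat walk1 -w2_closed.
have [r [r_route Pr r_size]] :=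
  IH _ (leq_trans shorter w_lt) cut_walk (P_cut _ _ _ w_walk w2_nil w2_closed Pw).
exists r; split => //.
  by rewrite !walk_end_cat w2_closed -walk_end_cat.
by right; case: r_size => [-> //|r_lt]; apply: ltn_trans r_lt shorter.
Qed.

Lemma route_uniq o d p : is_route ends o d p -> uniq p.
Proof. by case/and3P => _ _ /= /andP[_ /map_uniq]. Qed.

Lemma route_size o d p : is_route ends o d p -> size p <= #|darc E|.
Proof. by move/route_uniq/card_uniqP <-; apply: max_card. Qed.

Lemma dwalk_src_mem o q x :
  dwalk ends o q -> x \in q -> src x \in o :: [seq dst y | y <- q].
Proof.
elim: q o => [|y q IH] o //= /andP[/eqP <- q_walk].
rewrite in_cons => /predU1P[->|xq]; first by rewrite mem_head.
by rewrite in_cons IH ?orbT.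
Qed.

Lemma eq_route o d1 d2 q1 q2 :
  is_route ends o d1 q1 -> is_route ends o d2 q2 -> q1 =i q2 -> q1 = q2.
Proof.
move=> /and3P[walk1 _ uniq1] /and3P[walk2 _ uniq2] {d1 d2}.
elim: q1 o q2 walk1 walk2 uniq1 uniq2 => [|x1 r1 IH] o [|x2 r2] //=.
- by move=> _ _ _ _ /(_ x2); rewrite mem_head.
- by move=> _ _ _ _ /(_ x1); rewrite mem_head.
move=> /andP[/eqP src1 walk1] /andP[/eqP src2 walk2].
move=> /andP[fresh1 uniq1] /andP[fresh2 uniq2] eq12.
have x1x2 : x1 = x2.
  apply/eqP/negPn/negP => x12; have : x1 \in x2 :: r2 by rewrite -eq12 mem_head.
  rewrite in_cons (negbTE x12) => /(dwalk_src_mem walk2).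
  by rewrite src1 (negbTE fresh2).
subst x2; congr (_ :: _); apply: (IH (dst x1)) => // y.
have x1_notin r : uniq (dst x1 :: [seq dst z | z <- r]) -> x1 \notin r.
  by move=> /andP[/negP dx1 _]; apply/negP => x1r; apply/dx1/map_f.
have [->|yx1] := eqVneq y x1.
  by rewrite (negbTE (x1_notin _ uniq1)) (negbTE (x1_notin _ uniq2)).
by move: (eq12 y); rewrite !in_cons (negbTE yx1).
Qed.

End DirectedWalks.

Fixpoint bounded_seqs (T : finType) (n : nat) : seq (seq T) :=
  if n is n'.+1 then [::] :: [seq x :: s | x <- enum T, s <- bounded_seqs T n']
  else [:: [::]].

Lemma mem_bounded_seqs (T : finType) n (s : seq T) : size s <= n -> s \in bounded_seqs T n.
Proof.
elim: n s => [|n IH] [|x s] //= s_size; rewrite in_cons /=.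
by apply/allpairsP; exists (x, s); rewrite mem_enum IH.
Qed.

Lemma binary_sum_inj n (A B : pred 'I_n) :
  \sum_(i < n) A i * 2 ^ i = \sum_(i < n) B i * 2 ^ i -> A =1 B.
Proof.
elim: n A B => [|n IH] A B; first by move=> _ [].
have split_sum (C : pred 'I_n.+1) :
    \sum_(i < n.+1) C i * 2 ^ i = C ord0 + (\sum_(i < n) C (lift ord0 i) * 2 ^ i).*2.
  by rewrite big_ord_recl muln1 -muln2 big_distrl; congr (_ + _);
     apply: eq_bigr => i _; rewrite expnS mulnCA mulnC.
rewrite !split_sum => eqAB.
have eq0 : A ord0 = B ord0.
  by move: (congr1 odd eqAB); rewrite !oddD !oddb !odd_double !addbF.
move: eqAB; rewrite eq0 => /addnI/(can_inj doubleK)/IH eq_lift i.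
by case: (unliftP ord0 i) => [j ->|->].
Qed.

Lemma sum_pow2_rank_inj (T : finType) (P : pred T) (s1 s2 : seq T) :
  uniq s1 -> uniq s2 ->
  \sum_(x <- s1 | P x) 2 ^ enum_rank x = \sum_(x <- s2 | P x) 2 ^ enum_rank x ->
  forall x, P x -> (x \in s1) = (x \in s2).
Proof.
have ordinal_sum s : uniq s -> \sum_(x <- s | P x) 2 ^ enum_rank x =
    \sum_(i < #|T|) [&& enum_val i \in s & P (enum_val i)] * 2 ^ i.
  move=> s_uniq; rewrite big_mkcond big_uniq //= big_mkcond /=.
  rewrite (reindex (@enum_val T predT)) /=; last exact/onW_bij/enum_val_bij.
  by apply: eq_bigr => i _; rewrite enum_valK; case: (_ \in _); case: (P _); rewrite ?mul1n.
move=> uniq1 uniq2; rewrite !ordinal_sum // => /binary_sum_inj eq12 x Px.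
by have := eq12 (enum_rank x); rewrite /= enum_rankK Px !andbT.
Qed.

Lemma ex_argmin (T : Type) (P : T -> Prop) (f : T -> nat) :
  (exists x, P x) -> exists x, P x /\ forall y, P y -> f x <= f y.
Proof.
move=> [x Px]; have [n] := ubnP (f x); elim: n x Px => // n IH x Px fx_lt.
have [[y [Py fy_lt]]|x_min] := pselect (exists y, P y /\ f y < f x).
  exact: IH y Py (leq_trans fy_lt fx_lt).
by exists x; split => // y Py; rewrite leqNgt; apply/negP => fy_lt; apply: x_min; exists y.
Qed.

Lemma flow_ge0 (R : realType) (a b : R) (E : finType) (s : R -> seq (darc E)) x :
  (0 <= flow a b s x)%R.
Proof. by rewrite /flow fine_ge0 // measure_ge0. Qed.

Lemma ler_sum_subseq (R : numDomainType) (T : eqType) (G : T -> R) (r w : seq T) :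
  (forall x, (0 <= G x)%R) -> subseq r w -> (\sum_(x <- r) G x <= \sum_(x <- w) G x)%R.
Proof.
move=> G_ge0; elim: w r => [|y w IH] r; first by rewrite subseq0 => /eqP ->.
case: r => [_|x r]; first by rewrite big_nil sumr_ge0.
rewrite /= [X in (_ <= X)%R]big_cons; case: eqP => [<- /IH|_ /IH].
  by rewrite big_cons lerD2l.
by move/le_trans; apply; rewrite ler_wpDl.
Qed.

Lemma ler_sum_uniq (R : numDomainType) (T : finType) (P : pred T) (G : T -> R) q :
  uniq q -> (forall x, (0 <= G x)%R) -> (\sum_(x <- q | P x) G x <= \sum_x G x)%R.
Proof.
move=> q_uniq G_ge0; rewrite big_mkcond big_uniq //= big_mkcond /=.
by apply: ler_sum => x _; case: (x \in q); case: (P x).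
Qed.

Lemma exists_user_of_flow_neq (R : realType) (a b : R) (E : finType)
    (s1 s2 : R -> seq (darc E)) x :
  flow a b s1 x <> flow a b s2 x -> exists u, users a b u.
Proof.
move=> flow_neq; apply: contrapT => /forallNP no_user; apply: flow_neq.
have no_flow (s : R -> seq (darc E)) :
    ([set u | users a b u /\ x \in s u] = set0 :> set R)%classic.
  by apply/seteqP; split=> // u [/no_user].
by rewrite /flow !no_flow.
Qed.

(** * Lifting routes along a minor *)

Section MinorLift.
Variables (V E V' E' : finType) (ends : E -> V * V) (ends' : E' -> V' * V').
Variables (VS : {set V}) (ES C : {set E}) (pi : V -> V') (beta : E' -> E).
Hypothesis ES_VS : forall e, e \in ES -> ((ends e).1 \in VS) && ((ends e).2 \in VS).
Hypothesis C_ES : C \subset ES.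
Hypothesis pi_eq : forall x y, x \in VS -> y \in VS ->
  (pi x = pi y <-> connect (contr_rel ends C) x y).
Hypothesis beta_inj : injective beta.
Hypothesis beta_ES : forall e', beta e' \in ES :\: C.
Hypothesis ends_beta : forall e',
  ends' e' = (pi (ends (beta e')).1, pi (ends (beta e')).2) \/
  ends' e' = (pi (ends (beta e')).2, pi (ends (beta e')).1).

Local Notation src := (dsrc ends).
Local Notation dst := (ddst ends).
Local Notation src' := (dsrc ends').
Local Notation dst' := (ddst ends').
Local Notation walk_end o p := (last o [seq ddst ends x | x <- p]).
Local Notation walk_end' o p := (last o [seq ddst ends' x | x <- p]).

Definition same_orient (e' : E') : bool :=
  ends' e' == (pi (ends (beta e')).1, pi (ends (beta e')).2).

(* The arc [(e', b)] of the minor is the image of [beta e'] traversed in the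
   direction [b] if [e'] and [beta e'] are oriented alike, in the direction
   [~~ b] otherwise. *)
Definition lift_arc (x' : darc E') : darc E := (beta x'.1, x'.2 == same_orient x'.1).

Definition proj_arc (x : darc E) : option (darc E') :=
  if [pick e' | beta e' == x.1] is Some e' then Some (e', x.2 == same_orient e')
  else None.

Definition contracted (x : darc E) : bool := x.1 \in C.

Definition in_minor (x : darc E) : bool := (proj_arc x != None) || contracted x.

Definition proj_walk (q : seq (darc E)) : seq (darc E') := pmap proj_arc q.

Lemma proj_lift_arc x' : proj_arc (lift_arc x') = Some x'.
Proof.
rewrite /proj_arc /=; case: pickP => [e' /eqP/beta_inj ->|/(_ x'.1)]; last by rewrite eqxx.
by case: x' => e [] /=; case: same_orient.
Qed.

Lemma proj_arc_Some x x' : proj_arc x = Some x' -> x = lift_arc x'.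
Proof.
rewrite /proj_arc; case: pickP => // e' /eqP e'x [<-].
by case: x e'x => e b /= <-; rewrite /lift_arc /=; case: b; case: same_orient.
Qed.

Lemma proj_arc_contracted x : contracted x -> proj_arc x = None.
Proof.
rewrite /proj_arc /contracted; case: pickP => // e' /eqP <- betaC.
by have := beta_ES e'; rewrite !inE betaC.
Qed.

Lemma ends_lift_arc x' :
  src' x' = pi (src (lift_arc x')) /\ dst' x' = pi (dst (lift_arc x')).
Proof.
case: x' => e b; rewrite /lift_arc /dsrc /ddst /= /same_orient.
have [-> | ends_e] := eqVneq (ends' e) _; first by case: b.
by case: (ends_beta e) => ends_e'; rewrite ends_e' ?eqxx in ends_e *; case: b.
Qed.

Lemma lift_arc_VS x' : src (lift_arc x') \in VS /\ dst (lift_arc x') \in VS.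
Proof.
have := beta_ES x'.1; rewrite !inE => /andP[_ /ES_VS /andP[src_VS dst_VS]].
by rewrite /dsrc /ddst /=; case: (_ == _).
Qed.

Lemma pi_contracted x : contracted x -> pi (src x) = pi (dst x).
Proof.
move=> xC; have /ES_VS /andP[end1 end2] := fintype.subsetP C_ES _ xC.
have [src_VS dst_VS] : src x \in VS /\ dst x \in VS.
  by rewrite /dsrc /ddst; case: x.2.
apply/pi_eq/connect1 => //; apply/existsP; exists x.1; apply/andP; split => //.
by rewrite /dsrc /ddst; case: x.2; rewrite -surjective_pairing eqxx ?orbT.
Qed.

Lemma dwalk_proj q v : dwalk ends v q -> all in_minor q ->
  dwalk ends' (pi v) (proj_walk q) /\ walk_end' (pi v) (proj_walk q) = pi (walk_end v q).
Proof.
elim: q v => [|x q IH] v //= /andP[/eqP <- q_walk] /andP[x_minor q_minor].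
have [walk' end'] := IH _ q_walk q_minor.
rewrite /proj_walk /=; case x_proj: (proj_arc x) => [x'|] /=.
  have [src_x' dst_x'] := ends_lift_arc x'.
  by rewrite src_x' dst_x' -(proj_arc_Some x_proj) eqxx.
have xC : contracted x by move: x_minor; rewrite /in_minor x_proj.
by rewrite pi_contracted.
Qed.

Lemma mem_proj_walk x' q : (x' \in proj_walk q) = (lift_arc x' \in q).
Proof.
rewrite /proj_walk mem_pmap; apply/mapP/idP => [[x xq /esym/proj_arc_Some <-]//|x'q].
by exists (lift_arc x'); rewrite ?proj_lift_arc.
Qed.

Lemma proj_walk_contracted q : all contracted q -> proj_walk q = [::].
Proof. by elim: q => //= x q IH /andP[/proj_arc_contracted xC /IH]; rewrite /proj_walk /= xC. Qed.

Lemma contracted_dwalk v w : connect (contr_rel ends C) v w ->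
  exists cw, [/\ dwalk ends v cw, walk_end v cw = w & all contracted cw].
Proof.
move/connectP => [p + ->]; elim: p v => [|y p IH] v /=; first by exists [::].
move=> /andP[/existsP[e /andP[eC /orP[/eqP ends_e|/eqP ends_e]]] /IH[cw [walk_cw end_cw cw_C]]].
  by exists ((e, true) :: cw); rewrite /= /dsrc /ddst /contracted ends_e eqxx eC.
by exists ((e, false) :: cw); rewrite /= /dsrc /ddst /contracted ends_e eqxx eC.
Qed.

Lemma lift_dwalk d p' v : v \in VS -> d \in VS ->
  dwalk ends' (pi v) p' -> walk_end' (pi v) p' = pi d ->
  exists w, [/\ dwalk ends v w, walk_end v w = d, all in_minor w & proj_walk w = p'].
Proof.
have C_minor cw : all contracted cw -> all in_minor cw.
  by apply: sub_all => y; rewrite /in_minor => ->; rewrite orbT.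
elim: p' v => [|x' p' IH] v v_VS VS_d /=.
  move=> _ /(pi_eq v_VS VS_d)/contracted_dwalk[cw [walk_cw end_cw cw_C]].
  by exists cw; rewrite C_minor ?proj_walk_contracted.
move=> /andP[/eqP src_x' walk_p'] end_p'.
have [[src_x dst_x] [src_pi dst_pi]] := (lift_arc_VS x', ends_lift_arc x').
have /(pi_eq v_VS src_x)/contracted_dwalk[cw [walk_cw end_cw cw_C]] :
  pi v = pi (src (lift_arc x')) by rewrite -src_pi.
rewrite dst_pi in walk_p' end_p'.
have [w [walk_w end_w w_minor proj_w]] := IH _ dst_x VS_d walk_p' end_p'.
exists (cw ++ lift_arc x' :: w); split.
- by rewrite dwalk_cat walk_cw end_cw /= eqxx walk_w.
- by rewrite walk_end_cat end_cw.
- by rewrite all_cat C_minor //= /in_minor proj_lift_arc w_minor.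
- rewrite [LHS]pmap_cat -/(proj_walk cw) proj_walk_contracted //=.
  by rewrite proj_lift_arc -/(proj_walk w) proj_w.
Qed.

Lemma proj_walk_cat q1 q2 : proj_walk (q1 ++ q2) = proj_walk q1 ++ proj_walk q2.
Proof. exact: pmap_cat. Qed.

Lemma proj_closed_subwalk o w1 w2 w3 :
  dwalk ends o (w1 ++ w2 ++ w3) -> all in_minor (w1 ++ w2 ++ w3) ->
  uniq (pi o :: [seq dst' x | x <- proj_walk (w1 ++ w2 ++ w3)]) ->
  walk_end (walk_end o w1) w2 = walk_end o w1 -> proj_walk w2 = [::].
Proof.
rewrite !dwalk_cat !all_cat => /and3P[walk1 walk2 _] /and3P[minor1 minor2 _].
move=> proj_uniq w2_closed; have [_ end1] := dwalk_proj walk1 minor1.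
have [_] := dwalk_proj walk2 minor2; rewrite w2_closed.
case proj2: (proj_walk w2) => [//|x' p2] /= end2.
move: proj_uniq; rewrite !proj_walk_cat proj2 !map_cat -cat_cons cat_uniq.
case/and3P => _ /hasPn/(_ (pi (walk_end o w1))) + _; rewrite -end1 mem_last.
by rewrite end1 -end2 /= -cat_cons mem_cat mem_last => /(_ isT).
Qed.

Definition is_lift o d p' q := [/\ is_route ends o d q, all in_minor q & proj_walk q = p'].

Lemma exists_lift o d p' : o \in VS -> d \in VS ->
  is_route ends' (pi o) (pi d) p' -> exists q, is_lift o d p' q.
Proof.
move=> VS_o VS_d /and3P[walk' /eqP end' uniq'].
have [w [walk_w end_w w_minor proj_w]] := lift_dwalk VS_o VS_d walk' end'.
pose P w := all in_minor w /\ proj_walk w = p'.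
have P_cut w1 w2 w3 : dwalk ends o (w1 ++ w2 ++ w3) -> w2 != [::] ->
    walk_end (walk_end o w1) w2 = walk_end o w1 -> P (w1 ++ w2 ++ w3) -> P (w1 ++ w3).
  move=> cut_walk _ w2_closed [w_minor' proj_w'].
  rewrite -proj_w' in uniq'.
  have proj2 := proj_closed_subwalk cut_walk w_minor' uniq' w2_closed.
  split; first by move: w_minor'; rewrite !all_cat => /and3P[-> _ ->].
  by rewrite -proj_w' !proj_walk_cat proj2.
have [r [r_route [r_minor proj_r] _]] := route_of_dwalk P_cut walk_w (conj w_minor proj_w).
by exists r; split => //; rewrite -end_w.
Qed.

Definition contr_weight (q : seq (darc E)) : nat :=
  \sum_(x <- q | contracted x) 2 ^ enum_rank x.

Lemma contr_weight_le q : uniq q -> contr_weight q <= \sum_(x : darc E) 2 ^ enum_rank x.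
Proof.
move=> q_uniq; rewrite /contr_weight big_mkcond big_uniq //= big_mkcond /=.
by apply: leq_sum => x _; case: (_ \in _); case: contracted.
Qed.

Lemma is_lift_inj o d p' q1 q2 : is_lift o d p' q1 -> is_lift o d p' q2 ->
  contr_weight q1 = contr_weight q2 -> q1 = q2.
Proof.
move=> [route1 minor1 proj1] [route2 minor2 proj2] weight12.
apply: (eq_route route1 route2) => x.
case x_proj: (proj_arc x) => [x'|].
  by rewrite (proj_arc_Some x_proj) -!mem_proj_walk proj1 proj2.
have [xC|xnC] := boolP (contracted x).
  exact: sum_pow2_rank_inj (route_uniq route1) (route_uniq route2) weight12 _ xC.
have x_out q : all in_minor q -> x \notin q.
  by move=> /allP q_minor; apply/negP => /q_minor; rewrite /in_minor x_proj (negbTE xnC).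
by rewrite (negbTE (x_out _ minor1)) (negbTE (x_out _ minor2)).
Qed.

Local Open Scope classical_set_scope.
(* The lift of least weight, unique by [is_lift_inj]. *)
Definition lift_route o d p' : seq (darc E) :=
  xget [::] [set q | is_lift o d p' q /\
                     forall q', is_lift o d p' q' -> contr_weight q <= contr_weight q'].

Lemma lift_routeP o d p' : o \in VS -> d \in VS -> is_route ends' (pi o) (pi d) p' ->
  is_lift o d p' (lift_route o d p') /\
  forall q', is_lift o d p' q' -> contr_weight (lift_route o d p') <= contr_weight q'.
Proof.
move=> VS_o VS_d route'.
by have := xgetPex [::] (ex_argmin contr_weight (exists_lift VS_o VS_d route')).
Qed.
Local Close Scope classical_set_scope.

(** * The lifted routing game *)

Section LiftedGame.
Variable R : realType.
Local Notation U := (measurableTypeR R).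
Variables (a b : R) (L : {set V * V}) (L' : {set V' * V'}) (AS : {set V * V}).
Variable l0 : V * V.
Hypothesis AS_L : AS \subset L.
Hypothesis AS_VS : forall l, l \in AS -> (l.1 \in VS) && (l.2 \in VS).
Hypothesis L'_AS : L' = imset (fun l : V * V => (pi l.1, pi l.2)) (mem AS).
Variables (od' : R -> V' * V') (c' : R -> darc E' -> R -> R).
Variables (s1 s2 : R -> seq (darc E')).
Hypothesis od'_partition : od_partition L' a b od'.
Hypothesis c'_assignment : cost_assignment a b c'.
Hypothesis s1_equilibrium : strict_equilibrium ends' a b od' c' s1.
Hypothesis s2_equilibrium : strict_equilibrium ends' a b od' c' s2.

Local Open Scope classical_set_scope.

Definition lift_pair (l' : V' * V') : V * V :=
  xget l0 [set l | l \in AS /\ (pi l.1, pi l.2) = l'].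

Lemma lift_pairP u : users a b u ->
  [/\ lift_pair (od' u) \in AS, pi (lift_pair (od' u)).1 = (od' u).1
     & pi (lift_pair (od' u)).2 = (od' u).2].
Proof.
move=> u_user; have := od'_partition.1 u u_user; rewrite L'_AS => /imsetP[l l_AS l_od].
have [lift_AS lift_od] :
    lift_pair (od' u) \in AS /\ (pi (lift_pair (od' u)).1, pi (lift_pair (od' u)).2) = od' u.
  by have := @xgetPex _ l0 [set l | l \in AS /\ (pi l.1, pi l.2) = od' u]; apply; exists l.
by split; [| exact: (congr1 fst lift_od) | exact: (congr1 snd lift_od)].
Qed.

Lemma lift_pair_partition : od_partition L a b (lift_pair \o od').
Proof.
split=> [u /lift_pairP[l_AS _ _]|l]; first exact: (fintype.subsetP AS_L).
have -> : [set u | users a b u /\ (lift_pair \o od') u = l] =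
    \big[setU/set0]_(l' <- enum {: V' * V'} | lift_pair l' == l)
      [set u | users a b u /\ od' u = l'] :> set U.
  rewrite -bigcup_seq_cond; apply/seteqP.
  split=> [u [u_user <-]|u [l' /= /andP[_ /eqP <-] [u_user ->]]] //.
  by exists (od' u); rewrite /= ?mem_enum ?eqxx.
by apply: bigsetU_measurable => l' _; apply: od'_partition.2.
Qed.

Definition lift_profile (s : R -> seq (darc E')) (u : R) : seq (darc E) :=
  lift_route (lift_pair (od' u)).1 (lift_pair (od' u)).2 (s u).

Lemma lift_profileP s u : strategy_profile ends' a b od' s -> users a b u ->
  is_lift (lift_pair (od' u)).1 (lift_pair (od' u)).2 (s u) (lift_profile s u) /\
  forall q, is_lift (lift_pair (od' u)).1 (lift_pair (od' u)).2 (s u) q ->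
    contr_weight (lift_profile s u) <= contr_weight q.
Proof.
move=> [s_route _] u_user; have [l_AS od_src od_dst] := lift_pairP u_user.
have /andP[VS_o VS_d] := AS_VS l_AS.
by apply: lift_routeP => //; rewrite od_src od_dst; apply: s_route.
Qed.

Lemma flow_lift_profile s x' : strategy_profile ends' a b od' s ->
  flow a b (lift_profile s) (lift_arc x') = flow a b s x'.
Proof.
move=> s_profile; rewrite /flow; congr (fine (lebesgue_measure _)).
apply/seteqP; split=> u [u_user x_in]; split=> //.
  by have [[_ _ <-] _] := lift_profileP s_profile u_user; rewrite mem_proj_walk.
by have [[_ _ proj_q] _] := lift_profileP s_profile u_user; rewrite -mem_proj_walk proj_q.
Qed.

Definition routes' : seq (seq (darc E')) := bounded_seqs (darc E') #|darc E'|.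

Lemma route_in_routes' o d p : is_route ends' o d p -> p \in routes'.
Proof. by move/route_size/mem_bounded_seqs. Qed.

Lemma lift_profile_strategy s : strategy_profile ends' a b od' s ->
  strategy_profile ends a b (lift_pair \o od') (lift_profile s).
Proof.
move=> s_profile; split=> [u u_user|p]; first by have [[]] := lift_profileP s_profile u_user.
pose pairs := [seq (l', p') | l' <- enum {: V' * V'}, p' <- routes'].
have -> : [set u | users a b u /\ lift_profile s u = p] =
    \big[setU/set0]_(lp <- pairs | lift_route (lift_pair lp.1).1 (lift_pair lp.1).2 lp.2 == p)
      ([set u | users a b u /\ od' u = lp.1] `&` [set u | users a b u /\ s u = lp.2]) :> set U.
  rewrite -bigcup_seq_cond; apply/seteqP; split=> [u [u_user <-]|].
    exists (od' u, s u); last by [].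
    rewrite /= eqxx andbT; apply/allpairsP; exists (od' u, s u).
    by rewrite mem_enum (route_in_routes' (s_profile.1 u u_user)).
  by move=> u [[l' p'] /= /andP[_ /eqP <-] [[u_user <-] [_ <-]]].
apply: bigsetU_measurable => lp _; apply: measurableI; first exact: od'_partition.2.
exact: s_profile.2.
Qed.

Local Open Scope ring_scope.

Lemma measurable_users : measurable (users a b : set U).
Proof.
rewrite (_ : users a b = [set` `[a, b]]); first exact: measurable_itv.
by apply/seteqP; split=> u; rewrite /users /= in_itv.
Qed.

Definition cost' (f : darc E' -> R) (u : R) (r : seq (darc E')) : R :=
  \sum_(x' <- r) c' u x' (f x').

Lemma measurable_cost' f r : (forall x', 0 <= f x') ->
  measurable_fun (users a b : set U) (fun u : U => cost' f u r).
Proof.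
have [_ _ _ c'_measurable] := c'_assignment.
by move=> f_ge0; apply: measurable_sum => x'; apply: c'_measurable.
Qed.

Definition cost_diff f r s (u : R) : R := cost' f u r - cost' f u s.

(* The indicator turns [|cost_diff|] into a positive measurable function without
   changing it where the difference does not vanish. *)
Definition gap_term f r s (u : U) : R :=
  `|cost_diff f r s u| + \1_(users a b `&` [set v | cost_diff f r s v = 0]) u.

Definition gap (u : U) : R :=
  foldr (fun rs m => Order.min (Order.min (gap_term (flow a b s1) rs.1 rs.2 u)
                                          (gap_term (flow a b s2) rs.1 rs.2 u)) m)
        1 [seq (r, s) | r <- routes', s <- routes'].

Lemma measurable_gap_term f r s : (forall x', 0 <= f x') ->
  measurable_fun (users a b : set U) (gap_term f r s).
Proof.
move=> f_ge0; have diff_meas : measurable_fun (users a b : set U) (cost_diff f r s).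
  exact: measurable_realfun.measurable_funB (measurable_cost' r f_ge0) (measurable_cost' s f_ge0).
apply: measurable_realfun.measurable_funD.
  exact: measurableT_comp (@measurable_realfun.normr_measurable R setT) diff_meas.
apply/measurable_realfun.measurable_indic.
exact: diff_meas measurable_users [set 0] (measurable_set1 0).
Qed.

Lemma measurable_gap : measurable_fun (users a b : set U) gap.
Proof.
rewrite /gap; elim: [seq _ | _ <- _, _ <- _] => [|rs rss IH] /=; first exact: measurable_cst.
apply: measurable_realfun.measurable_minr => //.
by apply: measurable_realfun.measurable_minr; apply: measurable_gap_term => x'; apply: flow_ge0.
Qed.

Lemma gap_le1 u : gap u <= 1.
Proof. by rewrite /gap; elim: [seq _ | _ <- _, _ <- _] => //= rs rss IH; rewrite ge_min IH orbT. Qed.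

Lemma gap_term_gt0 f r s u : users a b u -> 0 < gap_term f r s u.
Proof.
move=> u_user; rewrite /gap_term indicE.
have [diff0|diff_neq0] := eqVneq (cost_diff f r s u) 0.
  by rewrite diff0 normr0 add0r mem_set.
by rewrite ltr_pwDl ?normr_gt0.
Qed.

Lemma gap_gt0 u : users a b u -> 0 < gap u.
Proof.
move=> u_user; rewrite /gap; elim: [seq _ | _ <- _, _ <- _] => /= [|rs rss IH]; first exact: ltr01.
by rewrite !lt_min !gap_term_gt0.
Qed.

Lemma gap_le_cost_diff f u r s : users a b u -> r \in routes' -> s \in routes' ->
  f = flow a b s1 \/ f = flow a b s2 ->
  cost' f u s < cost' f u r -> gap u <= cost' f u r - cost' f u s.
Proof.
move=> u_user r_route s_route f12 lt_sr.
have gap_le_term : gap u <= gap_term f r s u.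
  have : (r, s) \in [seq (r, s) | r <- routes', s <- routes'] by apply/allpairsP; exists (r, s).
  rewrite /gap; elim: [seq _ | _ <- _, _ <- _] => //= rs rss IH.
  by rewrite in_cons ge_min => /predU1P[<-|/IH ->]; rewrite ?orbT // ge_min; case: f12 => ->;
     rewrite lexx ?orbT.
apply: (le_trans gap_le_term); rewrite /gap_term indicE memNset; last first.
  by case=> _ /eqP; rewrite subr_eq0 => /eqP eq_rs; move: lt_sr; rewrite eq_rs ltxx.
by rewrite addr0 ger0_norm // subr_ge0 ltW.
Qed.

Definition nK : R := #|darc E'|%:R.
Definition nW : nat := \sum_(x : darc E) 2 ^ enum_rank x.
Definition nT : R :=
  \sum_(x : darc E) (flow a b (lift_profile s1) x + flow a b (lift_profile s2) x).

Definition delta (u : U) : R := gap u / (2 * (nK + 1)).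
Definition eta (u : U) : R := delta u / (2 * (nW%:R + 1)).
Definition eps (u : U) : R := eta u / (2 * (nT + 1)).

Definition huge_cost (u : R) : R :=
  \sum_(x' : darc E') (c' u x' (flow a b s1 x') + c' u x' (flow a b s2 x')) + 2.

Definition lift_cost (u : R) (x : darc E) (t : R) : R :=
  if proj_arc x is Some x' then c' u x' t + delta u
  else if contracted x then eta u * (2 ^ enum_rank x)%:R + eps u * t
  else huge_cost u + t.

Lemma nT_ge0 : 0 <= nT.
Proof. by apply: sumr_ge0 => x _; rewrite addr_ge0 ?flow_ge0. Qed.

Let scale_gt0 (x : R) : 0 <= x -> 0 < 2 * (x + 1). Proof. by move=> ?; lra. Qed.

Lemma scales_gt0 u : users a b u -> [/\ 0 < delta u, 0 < eta u & 0 < eps u].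
Proof.
move=> u_user.
have delta_pos : 0 < delta u by rewrite divr_gt0 ?gap_gt0 ?scale_gt0 ?ler0n.
have eta_pos : 0 < eta u by rewrite divr_gt0 ?scale_gt0 ?ler0n.
by split; rewrite // divr_gt0 ?scale_gt0 ?nT_ge0.
Qed.

Lemma scales_lt u : users a b u ->
  [/\ delta u * nK + (eta u * nW%:R + eps u * nT) < gap u,
      eta u * nW%:R + eps u * nT < delta u &
      eps u * nT < eta u].
Proof.
move=> u_user; have [delta_pos eta_pos eps_pos] := scales_gt0 u_user.
have nK_ge0 : 0 <= nK := ler0n _ _; have nW_ge0 : 0 <= nW%:R :> R := ler0n _ _.
have nT_ge0 := nT_ge0.
have gap_eq : delta u * (2 * (nK + 1)) = gap u by rewrite mulfVK // lt0r_neq0 ?scale_gt0.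
have delta_eq : eta u * (2 * (nW%:R + 1)) = delta u by rewrite mulfVK // lt0r_neq0 ?scale_gt0.
have eta_eq : eps u * (2 * (nT + 1)) = eta u by rewrite mulfVK // lt0r_neq0 ?scale_gt0.
have eps_lt : eps u * nT < eta u by nra.
have slack_lt : eta u * nW%:R + eps u * nT < delta u by nra.
by split=> //; nra.
Qed.

Lemma huge_cost_ge0 u : users a b u -> 0 <= huge_cost u.
Proof.
have [c'_ge0 _ _ _] := c'_assignment.
by move=> u_user; rewrite addr_ge0 // sumr_ge0 // => x' _; rewrite addr_ge0 ?c'_ge0 ?flow_ge0.
Qed.

Lemma lift_cost_assignment : cost_assignment a b lift_cost.
Proof.
have [c'_ge0 c'_cont c'_incr c'_meas] := c'_assignment.
have affine_cont (k e : R) : continuous (fun t : R => k + e * t).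
  move=> t; apply: continuousD; first exact: cst_continuous.
  by apply: continuousM; [exact: cst_continuous | exact: cvg_id].
have shift_cont (k : R) : continuous (fun t : R => k + t).
  by move=> t; apply: continuousD; [exact: cst_continuous | exact: cvg_id].
split.
- move=> u x t u_user t_ge0; have [delta_pos eta_pos eps_pos] := scales_gt0 u_user.
  rewrite /lift_cost; case: (proj_arc x) => [x'|].
    by apply: addr_ge0; [exact: c'_ge0 | exact: ltW].
  case: contracted; last exact: addr_ge0 (huge_cost_ge0 u_user) t_ge0.
  exact: addr_ge0 (mulr_ge0 (ltW eta_pos) (ler0n _ _)) (mulr_ge0 (ltW eps_pos) t_ge0).
- move=> u x u_user; rewrite /lift_cost; case: (proj_arc x) => [x'|].
    by apply: within_continuousD; [exact: c'_cont | exact/continuous_subspaceT/cst_continuous].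
  by apply: continuous_subspaceT; case: contracted.
- move=> u x t t' u_user t_ge0 lt_tt'; have [_ _ eps_pos] := scales_gt0 u_user.
  rewrite /lift_cost; case: (proj_arc x) => [x'|]; first by rewrite ltrD2r c'_incr.
  by case: contracted; rewrite ltrD2l // ltr_pM2l.
- have delta_meas : measurable_fun (users a b : set U) delta.
    exact: measurable_realfun.measurable_funM measurable_gap (measurable_cst _).
  have eta_meas : measurable_fun (users a b : set U) eta.
    exact: measurable_realfun.measurable_funM delta_meas (measurable_cst _).
  have eps_meas : measurable_fun (users a b : set U) eps.
    exact: measurable_realfun.measurable_funM eta_meas (measurable_cst _).
  move=> x t t_ge0; rewrite /lift_cost; case: (proj_arc x) => [x'|].
    exact: measurable_realfun.measurable_funD (c'_meas _ _ t_ge0) delta_meas.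
  case: contracted; apply: measurable_realfun.measurable_funD.
  + exact: measurable_realfun.measurable_funM eta_meas (measurable_cst _).
  + exact: measurable_realfun.measurable_funM eps_meas (measurable_cst _).
  + apply: measurable_realfun.measurable_funD (measurable_cst _).
    apply: measurable_sum => x'.
    by apply: measurable_realfun.measurable_funD; apply: c'_meas; apply: flow_ge0.
  + exact: measurable_cst.
Qed.

Lemma lift_cost_sum (F : darc E -> R) u q : all in_minor q ->
  \sum_(x <- q) lift_cost u x (F x) =
  \sum_(x' <- proj_walk q) c' u x' (F (lift_arc x')) + delta u * (size (proj_walk q))%:R
  + eta u * (contr_weight q)%:R + eps u * \sum_(x <- q | contracted x) F x.
Proof.
elim: q => [|x q IH] /=; first by rewrite /proj_walk /contr_weight !big_nil !mulr0 !addr0.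
move=> /andP[x_minor /IH {}IH]; rewrite /contr_weight !big_cons IH /proj_walk /=.
rewrite /lift_cost; case x_proj: (proj_arc x) => [x'|].
  have xnC : ~~ contracted x by apply/negP => /proj_arc_contracted; rewrite x_proj.
  by rewrite (negbTE xnC) big_cons -(proj_arc_Some x_proj) /= -addn1 natrD; ring.
have xC : contracted x by move: x_minor; rewrite /in_minor x_proj.
by rewrite xC natrD; ring.
Qed.

Section LiftedEquilibrium.
Variables (s : R -> seq (darc E')) (u : R).
Hypothesis s12 : s = s1 \/ s = s2.
Hypothesis u_user : users a b u.

Let s_strict : strict_equilibrium ends' a b od' c' s.
Proof. by case: s12 => ->. Qed.

Let s_profile : strategy_profile ends' a b od' s := s_strict.1.1.

Let f12 : flow a b s = flow a b s1 \/ flow a b s = flow a b s2.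
Proof. by case: s12 => ->; [left|right]. Qed.

Local Notation o := (lift_pair (od' u)).1.
Local Notation d := (lift_pair (od' u)).2.
Local Notation f := (flow a b s).
Local Notation F := (flow a b (lift_profile s)).
Local Notation cost q := (route_cost a b lift_cost (lift_profile s) u q).
Local Notation bound := (cost' f u (s u) + delta u * (size (s u))%:R
                         + (eta u * nW%:R + eps u * nT)).

Lemma cost_in_minor q : all in_minor q ->
  cost q = cost' f u (proj_walk q) + delta u * (size (proj_walk q))%:R
           + eta u * (contr_weight q)%:R + eps u * \sum_(x <- q | contracted x) F x.
Proof.
move=> q_minor; rewrite /route_cost lift_cost_sum //; do 3!congr (_ + _).
by apply: eq_bigr => x' _; rewrite flow_lift_profile.
Qed.

Lemma cost_in_minor_ge q : all in_minor q ->
  cost' f u (proj_walk q) + delta u * (size (proj_walk q))%:R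
  + eta u * (contr_weight q)%:R <= cost q.
Proof.
move=> q_minor; have [_ _ eps_pos] := scales_gt0 u_user.
rewrite cost_in_minor // lerDl (mulr_ge0 (ltW eps_pos)) //.
by apply: sumr_ge0 => x _; apply: flow_ge0.
Qed.

Lemma cost_lift_profile_le : cost (lift_profile s u) <=
  cost' f u (s u) + delta u * (size (s u))%:R
  + eta u * (contr_weight (lift_profile s u))%:R + eps u * nT.
Proof.
have [[q0_route q0_minor q0_proj] _] := lift_profileP s_profile u_user.
have [_ _ eps_pos] := scales_gt0 u_user.
rewrite cost_in_minor // q0_proj lerD2l ler_pM2l //.
apply: le_trans (ler_sum_uniq _ (route_uniq q0_route) (fun x => flow_ge0 a b _ x)) _.
by apply: ler_sum => x _; case: s12 => ->; rewrite ?lerDl ?lerDr flow_ge0.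
Qed.

Lemma cost_off_minor_ge q : ~~ all in_minor q -> cost' f u (s u) + 2 <= cost q.
Proof.
case/allPn=> x xq; rewrite /in_minor negb_or negbK => /andP[/eqP x_proj xnC].
have [c'_ge0 _ _ _] := c'_assignment; have [cost_ge0 _ _ _] := lift_cost_assignment.
have s_route := s_profile.1 u u_user.
have : cost' f u (s u) + 2 <= huge_cost u.
  rewrite lerD2r; apply: le_trans (ler_sum_uniq xpredT (route_uniq s_route)
    (fun x' => c'_ge0 _ x' _ u_user (flow_ge0 a b s x'))) _.
  by apply: ler_sum => x' _; case: s12 => ->; rewrite ?lerDl ?lerDr c'_ge0 ?flow_ge0.
move/le_trans; apply; rewrite /route_cost (big_rem _ xq) /=.
have -> : lift_cost u x (F x) = huge_cost u + F x by rewrite /lift_cost x_proj (negbTE xnC).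
rewrite -addrA lerDl addr_ge0 ?flow_ge0 // sumr_ge0 // => y _.
exact/cost_ge0/flow_ge0.
Qed.

Lemma cost_lift_profile_le_bound : cost (lift_profile s u) <= bound.
Proof.
have [[q0_route _ _] _] := lift_profileP s_profile u_user; have [_ eta_pos _] := scales_gt0 u_user.
apply: le_trans cost_lift_profile_le _; rewrite -!addrA !lerD2l lerD2r ler_pM2l // ler_nat.
exact: contr_weight_le (route_uniq q0_route).
Qed.

Lemma bound_lt_gap : bound < cost' f u (s u) + gap u.
Proof.
have [delta_pos _ _] := scales_gt0 u_user; have [gap_lt _ _] := scales_lt u_user.
have : delta u * (size (s u))%:R <= delta u * nK.
  by rewrite ler_pM2l // ler_nat (route_size (s_profile.1 u u_user)).
lra.
Qed.

Lemma cost_detour_gt q : is_route ends o d q -> all in_minor q ->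
  proj_walk q != s u -> bound < cost q.
Proof.
move=> /and3P[q_walk /eqP q_end _] q_minor proj_neq.
have [walk' end'] := dwalk_proj q_walk q_minor; rewrite q_end in end'.
have [r [r_route r_sub r_size]] := route_of_dwalk
  (P := fun r => subseq r (proj_walk q)) (fun w1 w2 w3 _ _ _ => subseq_trans
    (cat_subseq (subseq_refl w1) (suffix_subseq w2 w3))) walk' (subseq_refl _).
have [_ od_src od_dst] := lift_pairP u_user; rewrite end' od_src od_dst in r_route.
have [c'_ge0 _ _ _] := c'_assignment; have [delta_pos eta_pos _] := scales_gt0 u_user.
have [gap_lt slack_lt _] := scales_lt u_user.
have proj_le : cost' f u r <= cost' f u (proj_walk q).
  exact: ler_sum_subseq (fun x' => c'_ge0 u x' _ u_user (flow_ge0 a b s x')) r_sub.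
have cost_ge := cost_in_minor_ge q_minor.
have eta_W : 0 <= eta u * (contr_weight q)%:R by rewrite mulr_ge0 ?ler0n ?ltW.
have [r_eq|r_neq] := eqVneq r (s u).
  have size_lt : (size (s u) < size (proj_walk q))%N.
    rewrite -r_eq; case: r_size => // r_proj.
    by move: proj_neq; rewrite -r_proj r_eq eqxx.
  have : delta u * (size (s u))%:R + delta u <= delta u * (size (proj_walk q))%:R.
    by rewrite -[X in _ + X]mulr1 -mulrDr ler_pM2l // natr1 ler_nat.
  rewrite r_eq in proj_le; lra.
have lt_sr : cost' f u (s u) < cost' f u r.
  rewrite ltNge; apply: contra r_neq => le_rs.
  by apply/eqP; apply: s_strict.2 u u_user r r_route le_rs.
have := gap_le_cost_diff u_user (route_in_routes' r_route)
  (route_in_routes' (s_profile.1 u u_user)) f12 lt_sr.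
have := bound_lt_gap.
have : 0 <= delta u * (size (proj_walk q))%:R by rewrite mulr_ge0 ?ler0n ?ltW.
lra.
Qed.

Lemma cost_other_lift_gt q : is_lift o d (s u) q -> q != lift_profile s u ->
  cost (lift_profile s u) < cost q.
Proof.
move=> q_lift q_neq; have [q0_lift q0_min] := lift_profileP s_profile u_user.
have [_ q_minor q_proj] := q_lift.
have W_lt : (contr_weight (lift_profile s u) < contr_weight q)%N.
  rewrite ltn_neqAle q0_min // andbT; apply: contra q_neq => /eqP W_eq.
  by apply/eqP; apply: is_lift_inj q_lift q0_lift (esym W_eq).
have [_ eta_pos _] := scales_gt0 u_user; have [_ _ eps_lt] := scales_lt u_user.
have := cost_in_minor_ge q_minor; rewrite q_proj.
have : eta u * (contr_weight (lift_profile s u))%:R + eta u <= eta u * (contr_weight q)%:R.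
  by rewrite -[X in _ + X]mulr1 -mulrDr ler_pM2l // natr1 ler_nat.
have := cost_lift_profile_le.
lra.
Qed.

Lemma cost_lift_profile_lt q : is_route ends o d q -> q != lift_profile s u ->
  cost (lift_profile s u) < cost q.
Proof.
move=> q_route q_neq; have q0_le := cost_lift_profile_le_bound.
have [q_minor|q_off] := boolP (all in_minor q); last first.
  by have := cost_off_minor_ge q_off; have := bound_lt_gap; have := gap_le1 u; lra.
have [proj_eq|proj_neq] := eqVneq (proj_walk q) (s u).
  by apply: (cost_other_lift_gt _ q_neq); split.
exact: le_lt_trans q0_le (cost_detour_gt q_route q_minor proj_neq).
Qed.

End LiftedEquilibrium.

Lemma lift_profile_equilibrium s : s = s1 \/ s = s2 ->
  equilibrium ends a b (lift_pair \o od') lift_cost (lift_profile s).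
Proof.
move=> s12; split.
  apply: lift_profile_strategy.
  by case: s12 => ->; [exact: s1_equilibrium.1.1 | exact: s2_equilibrium.1.1].
move=> u u_user q q_route; have [->|q_neq] := eqVneq q (lift_profile s u); first exact: lexx.
exact/ltW/cost_lift_profile_lt.
Qed.

Lemma not_uniqueness_property x' : flow a b s1 x' <> flow a b s2 x' ->
  ~ uniqueness_property ends L a b.
Proof.
move=> flow_neq unique; apply: flow_neq.
rewrite -(flow_lift_profile x' s1_equilibrium.1.1) -(flow_lift_profile x' s2_equilibrium.1.1).
by apply: (unique _ _ lift_pair_partition lift_cost_assignment);
  apply: lift_profile_equilibrium; [left|right].
Qed.

End LiftedGame.
End MinorLift.

Theorem mainTheorem11 (R : realType) (a b : R)
  (V E : finType) (ends : E -> V * V) (L : {set V * V})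
  (V' E' : finType) (ends' : E' -> V' * V') (L' : {set V' * V'}) :
  simple_demand L -> simple_demand L' ->
  is_minor ends L ends' L' ->
  (exists (od : R -> V' * V') (c : R -> darc E' -> R -> R)
          (sigma1 sigma2 : R -> seq (darc E')) (x : darc E'),
      [/\ od_partition L' a b od, cost_assignment a b c,
          strict_equilibrium ends' a b od c sigma1,
          strict_equilibrium ends' a b od c sigma2 &
          flow a b sigma1 x <> flow a b sigma2 x]) ->
  ~ uniqueness_property ends L a b.
Proof.
move=> _ _ [VS [ES [AS [C [pi [beta minor]]]]]].
case: minor => [[ES_VS AS_L AS_VS C_ES] [[pi_eq _] [[beta_inj _ beta_ES ends_beta] [_ L'_AS]]]].
move=> [od' [c' [s1 [s2 [x' [od'_partition c'_assignment s1_eq s2_eq flow_neq]]]]]].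
have [u u_user] := exists_user_of_flow_neq flow_neq.
have := od'_partition.1 u u_user; rewrite L'_AS => /imsetP[l0 _ _].
exact: (not_uniqueness_property ES_VS C_ES pi_eq beta_inj beta_ES ends_beta
          l0 AS_L AS_VS L'_AS od'_partition c'_assignment s1_eq s2_eq flow_neq).
Qed.
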